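(* Let $k\ge 1$ and let $\{v_1,\ldots,v_k\}$ be a set of $k$ distinct integers that does not have the LR property. Then $\operatorname{lcm}(2,3,\ldots,k+1)$ divides $\prod_{i=1}^{k} v_i$.
   Context: For a real number $x$, $\|x\|$ denotes the distance from $x$ to the nearest integer. A finite set $S$ of $m$ integers has the LR (lonely runner) property if there exists a real $t$ such that $\|tv\|\ge \frac{1}{m+1}$ for all $v\in S$. *)

From Stdlib Require Import Reals ZArith List.
Open Scope R_scope.

(* ||x|| : distance from x to the nearest integer.
   frac_part x = x - floor x lies in [0,1); the nearest integer is floor x or floor x + 1. *)
Definition dist_nearest_int (x : R) : R := Rmin (frac_part x) (1 - frac_part x).

(* A finite set S of m integers (given as a duplicate-free list, m = length S)
   has the LR (lonely runner) property. *)
Definition LR_property (S : list Z) : Prop :=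
  exists t : R, forall v : Z, In v S ->
    dist_nearest_int (t * IZR v) >= 1 / (INR (length S) + 1).

Definition lcm_upto (k : nat) : Z :=
  fold_right Z.lcm 1%Z (map Z.of_nat (seq 2 k)).

Definition prodZ (l : list Z) : Z := fold_right Z.mul 1%Z l.

From Stdlib Require Import Reals ZArith List Lra Lia.

(* If some m in [2, k+1] divided no v_i, the time t = 1/m would place every runner v_i at a
   nonzero multiple of 1/m modulo 1, hence at distance at least 1/m >= 1/(k+1) from the
   start: the set would have the LR property.  So each such m divides some v_i, hence the
   product, and therefore so does their lcm. *)

Lemma lcm_fold_divide (l : list Z) (n : Z) :
  (forall x, In x l -> (x | n)%Z) -> (fold_right Z.lcm 1%Z l | n)%Z.
Proof.
  induction l as [|a l IH]; intros Hdiv; simpl.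
  - apply Z.divide_1_l.
  - apply Z.lcm_least; [apply Hdiv; now left | apply IH; intros; apply Hdiv; now right].
Qed.

Lemma divide_prodZ (l : list Z) (x m : Z) : In x l -> (m | x)%Z -> (m | prodZ l)%Z.
Proof.
  induction l as [|a l IH]; simpl; intros Hin Hdiv; [contradiction|].
  destruct Hin as [<- | Hin].
  - now apply Z.divide_mul_l.
  - apply Z.divide_mul_r, IH; assumption.
Qed.

Lemma frac_part_IZR_div (v m : Z) :
  (0 < m)%Z -> frac_part (IZR v / IZR m) = IZR (v mod m) / IZR m.
Proof.
  intros Hm.
  assert (Hm' : 0 < IZR m) by now apply IZR_lt.
  pose proof (Z.mod_pos_bound v m Hm) as [Hr0 Hrm].
  assert (Hfrac : 0 <= IZR (v mod m) / IZR m < 1).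
  { split.
    - apply Rmult_le_pos; [apply IZR_le | apply Rlt_le, Rinv_0_lt_compat]; assumption.
    - apply (Rmult_lt_reg_r (IZR m)); [exact Hm'|].
      unfold Rdiv. rewrite Rmult_assoc, Rinv_l, Rmult_1_r, Rmult_1_l by lra.
      now apply IZR_lt. }
  assert (Hsplit : IZR v / IZR m = IZR (v / m) + IZR (v mod m) / IZR m).
  { rewrite (Z.div_mod v m) at 1 by lia.
    rewrite plus_IZR, mult_IZR. field. lra. }
  symmetry. exact (proj2 (Int_part_frac_part_spec _ _ _ Hfrac Hsplit)).
Qed.

Lemma dist_nearest_int_IZR_div (v m : Z) :
  (0 < m)%Z -> ~ (m | v)%Z -> 1 / IZR m <= dist_nearest_int (IZR v / IZR m).
Proof.
  intros Hm Hndiv.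
  assert (Hm' : 0 < IZR m) by now apply IZR_lt.
  pose proof (Z.mod_pos_bound v m Hm) as Hr.
  assert (Hr0 : (v mod m <> 0)%Z) by (rewrite Z.mod_divide by lia; exact Hndiv).
  assert (Hlow : 1 <= IZR (v mod m)) by (apply IZR_le; lia).
  assert (Hhigh : IZR (v mod m) + 1 <= IZR m) by (rewrite <- plus_IZR; apply IZR_le; lia).
  unfold dist_nearest_int. rewrite frac_part_IZR_div by exact Hm.
  apply Rmin_glb.
  - apply Rmult_le_compat_r; [apply Rlt_le, Rinv_0_lt_compat|]; lra.
  - replace (1 - IZR (v mod m) / IZR m) with ((IZR m - IZR (v mod m)) / IZR m)
      by (field; lra).
    apply Rmult_le_compat_r; [apply Rlt_le, Rinv_0_lt_compat|]; lra.
Qed.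

Lemma LR_property_of_not_divide (S : list Z) (m : Z) :
  (0 < m <= Z.of_nat (length S) + 1)%Z ->
  (forall v, In v S -> ~ (m | v)%Z) -> LR_property S.
Proof.
  intros [Hm Hmk] Hndiv. exists (/ IZR m). intros v Hv.
  rewrite Rmult_comm. apply Rle_ge.
  apply Rle_trans with (1 / IZR m); [| now apply dist_nearest_int_IZR_div, Hndiv].
  assert (Hmk' : IZR m <= INR (length S) + 1).
  { rewrite INR_IZR_INZ, <- plus_IZR. now apply IZR_le. }
  apply Rmult_le_compat_l; [lra|].
  apply Rinv_le_contravar; [apply IZR_lt|]; assumption.
Qed.

Theorem lemma3 (k : nat) (v : list Z) :
  (1 <= k)%nat -> length v = k -> NoDup v -> ~ LR_property v ->
  (lcm_upto k | prodZ v)%Z.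
Proof.
  intros _ Hlen _ HnotLR.
  apply lcm_fold_divide. intros m Hm.
  apply in_map_iff in Hm as [n [<- Hn]]. apply in_seq in Hn.
  destruct (Znumtheory.Zdivide_dec (Z.of_nat n) (prodZ v)) as [Hdiv | Hndiv];
    [exact Hdiv | exfalso].
  apply HnotLR, (LR_property_of_not_divide v (Z.of_nat n)); [lia |].
  intros w Hw Hdiv. apply Hndiv. exact (divide_prodZ v w _ Hw Hdiv).
Qed.
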